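(* Suppose the nontrivial move problem has been solved: each agent $a$ holds a direction $\mathrm{dir}_a\in\{\text{right},\text{left}\}$ such that the round in which every agent starts in direction $\mathrm{dir}_a$ is a nontrivial move. Then the direction agreement problem can be solved in $O(1)$ further rounds. This holds even when the agents have no IDs.
   Context: Model: $n>4$ agents are at distinct, arbitrary initial positions on a circle of circumference $1$ and act in synchronised unit-time rounds. Each agent has its own notion of right (clockwise) and left; these need not be consistent across agents. At the start of a round each agent chooses a direction and moves at unit speed. Agents never pass: colliding moving agents instantly reverse direction. There is no communication. At the end of each round an agent learns the clockwise distance, in its own orientation, from its start-of-round to its end-of-round position. Rotation index: if $n_C$ agents start clockwise and $n_A$ anticlockwise (objective orientation), each agent moves to the initial position of the agent $(n_C-n_A)\bmod n$ places clockwise; this is the rotation index. A nontrivial move is a round whose rotation index is not in $\{0,n/2\}$. The direction agreement problem is solved when all agents hold a coherent view of which direction is clockwise. *)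

From HB Require Import structures.
From mathcomp Require Import all_boot all_order all_algebra.
From mathcomp Require Import reals.
Set Implicit Arguments. Unset Strict Implicit. Unset Printing Implicit Defensive.
Import Order.TTheory GRing.Theory Num.Theory.
Local Open Scope ring_scope.

(* Convention: the circle is [0,1); clockwise = increasing coordinate.
   Booleans for directions: true = right (in the agent's own frame).
   sigma a = true  iff  agent a's "right" is the objective clockwise. *)

Definition dist_cw (R : realFieldType) (u v : R) : R :=
  if u <= v then v - u else v - u + 1.

Definition local_dist (R : realFieldType) (s : bool) (u v : R) : R :=
  if s then dist_cw u v else dist_cw v u.

(* rotation index (n_C - n_A) mod n, where cw a says agent a moves
   objectively clockwise in the round *)
Definition rotation_index (n : nat) (cw : 'I_n -> bool) : nat :=
  ((#|[pred a | cw a]| + (n - #|[pred a | ~~ cw a]|)) %% n)%N.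

Definition nontrivial_index (n r : nat) : bool := (r != 0%N) && (r.*2 != n).

(* An anonymous deterministic protocol: every agent runs the same rules.
   Inputs: n, the agent's own dir_a, and the list of its observations so far
   (the clockwise distances, in its own orientation, of the previous rounds).
   pmove gives the direction (true = own right) for the next round;
   pout gives the agent's final answer "my right is clockwise". *)
Record protocol (R : Type) := Protocol {
  pmove : nat -> bool -> seq R -> bool;
  pout  : nat -> bool -> seq R -> bool }.

Section Exec.
Variables (R : realType) (P : protocol R) (n : nat) (x : nat -> R)
          (sigma dir : 'I_n -> bool).
(* Agents are labelled by their initial slot: agent a starts at position x a,
   where slots 0..n-1 are in clockwise order.  State: cumulative rotation S
   (agent a is at slot (a + cs) mod n) and histories of observations. *)

Definition objcw (h : 'I_n -> seq R) (a : 'I_n) : bool :=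
  pmove P n (dir a) (h a) == sigma a.

Definition step (st : nat * ('I_n -> seq R)) : nat * ('I_n -> seq R) :=
  let: (cs, h) := st in
  let r := rotation_index (objcw h) in
  (((cs + r) %% n)%N,
   fun a => rcons (h a)
     (local_dist (sigma a) (x ((a + cs) %% n)%N) (x ((a + cs + r) %% n)%N))).

Definition run (t : nat) : nat * ('I_n -> seq R) :=
  iter t step (0%N, fun _ => [::]).

Definition answers (t : nat) (a : 'I_n) : bool :=
  pout P n (dir a) ((run t).2 a).
End Exec.

Definition coherent (n : nat) (sigma b : 'I_n -> bool) : Prop :=
  forall a a' : 'I_n, (b a == sigma a) = (b a' == sigma a').

(* Every agent performs its nontrivial move twice.  With rotation index r,
   each agent advances 2r slots clockwise, so the clockwise arc it sweeps has
   length x_(a+2r) - x_a plus the number of times it passes position 0; this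
   is below one full turn iff 2r < n, and 2r = n is excluded.  An agent whose
   right is anticlockwise measures each nonzero arc d as 1 - d, hence the
   total 2 - (arc), which is below 1 iff 2r > n.  Answering "my right is
   clockwise" iff the measured total is below 1 therefore makes all agents
   right when 2r < n and all wrong when 2r > n: their views are coherent. *)

From HB Require Import structures.
From mathcomp Require Import all_boot all_order all_algebra.
From mathcomp Require Import reals.
From mathcomp Require Import zify lra.
Set Implicit Arguments. Unset Strict Implicit. Unset Printing Implicit Defensive.
Import Order.TTheory GRing.Theory Num.Theory.
Local Open Scope ring_scope.

Lemma dist_cwC (R : realFieldType) (u v : R) :
  u != v -> dist_cw v u = 1 - dist_cw u v.
Proof. by rewrite /dist_cw; case: ltgtP => // _ _; lra. Qed.

Lemma rot_slot_neq n i r : (0 < r < n)%N -> (i < n)%N -> ((i + r) %% n != i)%N.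
Proof.
move=> /andP[r_gt0 r_lt_n] i_lt_n.
rewrite -{2}(modn_small i_lt_n) -{2}(addn0 i) eqn_modDl mod0n modn_small //.
by rewrite -lt0n.
Qed.

Section Slots.
Variables (R : realType) (n : nat) (x : nat -> R).
Hypothesis x_range : forall i : nat, (i < n)%N -> 0 <= x i < 1.
Hypothesis x_incr : forall i j : nat, (i < j < n)%N -> x i < x j.

Lemma dist_cw_slots i j : (i < n)%N -> (j < n)%N ->
  dist_cw (x i) (x j) = x j - x i + (j < i)%N%:R.
Proof.
move=> i_lt_n j_lt_n; rewrite /dist_cw.
case: (ltngtP i j) => [lt_ij|lt_ji|->]; last by rewrite lexx addr0.
- by rewrite ltW ?addr0 // x_incr ?lt_ij.
- by rewrite leNgt x_incr ?lt_ji.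
Qed.

Lemma dist_cw_rot i r : (i < n)%N -> (r < n)%N ->
  dist_cw (x i) (x ((i + r) %% n)) = x ((i + r) %% n) - x i + ((i + r) %/ n)%:R.
Proof.
move=> i_lt_n r_lt_n; have n_gt0 : (0 < n)%N by lia.
rewrite dist_cw_slots ?ltn_pmod //; congr (_ + _%:R).
have [small|big] := ltnP (i + r) n.
  by rewrite modn_small // divn_small // ltnNge leq_addr.
have wrapped : (i + r - n < i)%N by lia.
rewrite -(subnK big) modnDr divnDr // divnn n_gt0 divn_small ?modn_small ?wrapped //; lia.
Qed.

Lemma dist_cw_rot2 i r : (i < n)%N -> (r < n)%N ->
  dist_cw (x i) (x ((i + r) %% n)) + dist_cw (x ((i + r) %% n)) (x ((i + r + r) %% n))
  = x ((i + r + r) %% n) - x i + ((i + r + r) %/ n)%:R.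
Proof.
move=> i_lt_n r_lt_n; have n_gt0 : (0 < n)%N by lia.
have p_lt_n : ((i + r) %% n < n)%N by rewrite ltn_pmod.
have -> : ((i + r + r) %/ n = (i + r) %/ n + ((i + r) %% n + r) %/ n)%N.
  by rewrite {1}(divn_eq (i + r) n) -addnA divnMDl.
have -> : ((i + r + r) %% n = ((i + r) %% n + r) %% n)%N by rewrite modnDml.
rewrite !dist_cw_rot // natrD; lra.
Qed.

Lemma x_slot_inj i j : (i < n)%N -> (j < n)%N -> (x i == x j) = (i == j).
Proof.
move=> i_lt_n j_lt_n; case: (ltngtP i j) => [lt_ij|lt_ji|->]; last exact: eqxx.
- by rewrite lt_eqF // x_incr ?lt_ij.
- by rewrite gt_eqF // x_incr ?lt_ji.
Qed.

Lemma x_slot_lt i j : (i < n)%N -> (j < n)%N -> (x i < x j) = (i < j)%N.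
Proof.
move=> i_lt_n j_lt_n; case: (ltngtP i j) => [lt_ij|lt_ji|->]; last exact: ltxx.
- by rewrite x_incr ?lt_ij.
- by apply/negbTE; rewrite -leNgt ltW // x_incr ?lt_ji.
Qed.

Lemma winding_lt1 i j k : (i < n)%N -> (j < n)%N ->
  (x j - x i + k%:R < 1) = (k * n + j < n + i)%N.
Proof.
move=> i_lt_n j_lt_n; have /andP[xi_ge0 xi_lt1] := x_range i_lt_n.
have /andP[xj_ge0 xj_lt1] := x_range j_lt_n.
case: k => [|[|k]].
- by rewrite addr0 mul0n (_ : (j < n + i)%N) 1?ltn_addr //; lra.
- by rewrite mul1n ltn_add2l -x_slot_lt // -subr_lt0; apply/idP/idP => ?; lra.
- have k_ge2 : 2%:R <= k.+2%:R :> R by rewrite ler_nat.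
  rewrite (_ : (k.+2 * n + j < n + i)%N = false); last by nia.
  by apply/negbTE; rewrite -leNgt; lra.
Qed.

Lemma winding_gt1 i j k : (i < n)%N -> (j < n)%N ->
  (1 < x j - x i + k%:R) = (n + i < k * n + j)%N.
Proof.
move=> i_lt_n j_lt_n; have /andP[xi_ge0 xi_lt1] := x_range i_lt_n.
have /andP[xj_ge0 xj_lt1] := x_range j_lt_n.
case: k => [|[|k]].
- rewrite addr0 mul0n (_ : (n + i < j)%N = false); last by lia.
  by apply/negbTE; rewrite -leNgt; lra.
- by rewrite mul1n ltn_add2l -x_slot_lt // -subr_gt0; apply/idP/idP => ?; lra.
- have k_ge2 : 2%:R <= k.+2%:R :> R by rewrite ler_nat.
  rewrite (_ : (n + i < k.+2 * n + j)%N); last by nia.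
  lra.
Qed.

Lemma local_dist_rot2_lt1 s i r : (0 < r < n)%N -> (r.*2 != n)%N -> (i < n)%N ->
  ((local_dist s (x i) (x ((i + r) %% n))
    + local_dist s (x ((i + r) %% n)) (x ((i + r + r) %% n)) < 1) == s)
  = (r.*2 < n)%N.
Proof.
move=> r_range r2_neq_n i_lt_n; have n_gt0 : (0 < n)%N by lia.
have r_lt_n : (r < n)%N by lia.
have p1_lt_n : ((i + r) %% n < n)%N by rewrite ltn_pmod.
have p2_lt_n : ((i + r + r) %% n < n)%N by rewrite ltn_pmod.
have windings : ((i + r + r) %/ n * n + (i + r + r) %% n = i + r + r)%N.
  by rewrite -divn_eq.
case: s; rewrite /local_dist.
  by rewrite eqb_id dist_cw_rot2 // winding_lt1 // windings; lia.
have p1_neq_i : x i != x ((i + r) %% n).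
  by rewrite x_slot_inj // eq_sym rot_slot_neq.
have p2_neq_p1 : x ((i + r) %% n) != x ((i + r + r) %% n).
  rewrite x_slot_inj // eq_sym -[((i + r + r) %% n)%N]modnDml.
  exact: rot_slot_neq.
rewrite eqbF_neg (dist_cwC p1_neq_i) (dist_cwC p2_neq_p1).
set d1 := dist_cw _ _; set d2 := dist_cw _ _.
have -> : (1 - d1 + (1 - d2) < 1) = (1 < d1 + d2) by apply/idP/idP => ?; lra.
by rewrite dist_cw_rot2 // winding_gt1 // windings; lia.
Qed.

End Slots.

Definition double_move (R : realType) : protocol R :=
  Protocol (fun _ d _ => d) (fun _ _ h => nth 0 h 0 + nth 0 h 1 < 1).

Lemma double_move_answers (R : realType) n (x : nat -> R) (sigma dir : 'I_n -> bool)
    (a : 'I_n) :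
  let r := rotation_index (fun a : 'I_n => dir a == sigma a) in
  answers (double_move R) x sigma dir 2 a
  = (local_dist (sigma a) (x a) (x ((a + r) %% n)%N)
     + local_dist (sigma a) (x ((a + r) %% n)%N) (x ((a + r + r) %% n)%N) < 1).
Proof.
move=> r; have r_lt_n : (r < n)%N by rewrite ltn_pmod // (leq_ltn_trans _ (ltn_ord a)).
by rewrite /answers /run /= -/r addn0 add0n (modn_small r_lt_n) (modn_small (ltn_ord a)).
Qed.

Theorem lemma6 :
  exists K : nat, forall R : realType, exists P : protocol R,
  forall (n : nat) (x : nat -> R) (sigma dir : 'I_n -> bool),
    (4 < n)%N ->
    (forall i : nat, (i < n)%N -> 0 <= x i < 1) ->
    (forall i j : nat, (i < j < n)%N -> x i < x j) ->
    nontrivial_index n ((rotation_index (fun a : 'I_n => dir a == sigma a))) ->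
    coherent sigma (answers P x sigma dir K).
Proof.
exists 2%N => R; exists (double_move R) => n x sigma dir n_gt4 x_range x_incr.
set r := rotation_index _ => /andP[r_neq0 r2_neq_n].
have r_range : (0 < r < n)%N by rewrite lt0n r_neq0 ltn_pmod //; lia.
have agent_correct (a : 'I_n) :
    (answers (double_move R) x sigma dir 2 a == sigma a) = (r.*2 < n)%N.
  by rewrite double_move_answers local_dist_rot2_lt1.
by move=> a a'; rewrite !agent_correct.
Qed.
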